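(* Let $p$ be a two-phase solution with constants $c_0,c_1,c_2$. At points where $p\neq0$, $$\partial_x\nu_1=2i\nu_1(\mu_1+\mu_2-\mu_1^*-\mu_2^* ),\qquad \partial_x\nu_2=4i\nu_1(\mu_1^*\mu_2^*-\mu_1\mu_2)-2c_2\,\partial_x\nu_1,\qquad \partial_t\nu_1=\partial_x\nu_2,$$ $$\partial_t\nu_2=8i\nu_1\big((\mu_1-\mu_1^* )|\mu_2|^2+(\mu_2-\mu_2^* )|\mu_1|^2\big)-4c_2\,\partial_x\nu_2-4c_2^2\,\partial_x\nu_1.$$
   Context: Let $p(x,t)$, $(x,t)\in\mathbb R^2$, be a smooth complex-valued solution of the focusing nonlinear Schrödinger equation $ip_t+p_{xx}+2|p|^2p=0$; $^*$ denotes complex conjugation and subscripts denote partial derivatives. Put $\mathbb U=\begin{pmatrix}-i\lambda& ip\\ ip^*& i\lambda\end{pmatrix}$ and $\mathbb V=\begin{pmatrix}-2i\lambda^2+i|p|^2& 2i\lambda p-p_x\\ 2i\lambda p^*+p^*_x& 2i\lambda^2-i|p|^2\end{pmatrix}$. The solution $p$ is called a two-phase solution if there exist real constants $c_0,c_1,c_2$ such that the matrix $\Psi=\begin{pmatrix}\Psi_{11}&\Psi_{12}\\ \Psi_{21}&-\Psi_{11}\end{pmatrix}$ with $\Psi_{11}=-i\lambda^3-ic_2\lambda^2+(\tfrac12 i|p|^2-ic_1)\lambda+\tfrac14(pp^*_x-p_xp^* )+\tfrac12 ic_2|p|^2-ic_0$, $\Psi_{12}=ip\lambda^2+(-\tfrac12p_x+ic_2p)\lambda-\tfrac14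 ip_{xx}-\tfrac12 ip|p|^2-\tfrac12c_2p_x+ic_1p$, $\Psi_{21}=ip^*\lambda^2+(\tfrac12p^*_x+ic_2p^* )\lambda-\tfrac14 ip^*_{xx}-\tfrac12 ip^*|p|^2+\tfrac12c_2p^*_x+ic_1p^*$ satisfies $\Psi_x=[\mathbb U,\Psi]$ and $\Psi_t=[\mathbb V,\Psi]$ identically in $\lambda\in\mathbb C$. Set $\nu_1=|p|^2$ and $\nu_2=i(p^*p_x-pp^*_x)$ (both real). At points where $p\neq0$ the Dirichlet eigenvalues $\mu_1,\mu_2\in\mathbb C$ are defined (up to order) by $\Psi_{12}(\lambda)=ip(\lambda-\mu_1)(\lambda-\mu_2)$. *)

From Stdlib Require Import Reals List.
Open Scope R_scope.

Definition Cx : Type := (R * R)%type.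
Definition Cre (z : Cx) : R := fst z.
Definition Cim (z : Cx) : R := snd z.
Definition RtoC (r : R) : Cx := (r, 0).
Definition C0 : Cx := (0, 0).
Definition Ci : Cx := (0, 1).
Definition Cadd (z w : Cx) : Cx := (fst z + fst w, snd z + snd w).
Definition Copp (z : Cx) : Cx := (- fst z, - snd z).
Definition Csub (z w : Cx) : Cx := Cadd z (Copp w).
Definition Cmul (z w : Cx) : Cx :=
  (fst z * fst w - snd z * snd w, fst z * snd w + snd z * fst w).
Definition Cconj (z : Cx) : Cx := (fst z, - snd z).
Definition Cnorm2 (z : Cx) : R := fst z * fst z + snd z * snd z.

Declare Scope C_scope.
Delimit Scope C_scope with C.
Infix "+" := Cadd : C_scope.
Infix "-" := Csub : C_scope.
Infix "*" := Cmul : C_scope.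
Notation "- z" := (Copp z) : C_scope.

Definition Cderiv (f : R -> Cx) (y : R) (l : Cx) : Prop :=
  derivable_pt_lim (fun s => fst (f s)) y (fst l) /\
  derivable_pt_lim (fun s => snd (f s)) y (snd l).

Record M2 : Type := mkM2 { m11 : Cx; m12 : Cx; m21 : Cx; m22 : Cx }.

Definition Mmul (A B : M2) : M2 :=
  mkM2 (m11 A * m11 B + m12 A * m21 B)%C (m11 A * m12 B + m12 A * m22 B)%C
       (m21 A * m11 B + m22 A * m21 B)%C (m21 A * m12 B + m22 A * m22 B)%C.
Definition Msub (A B : M2) : M2 :=
  mkM2 (m11 A - m11 B)%C (m12 A - m12 B)%C (m21 A - m21 B)%C (m22 A - m22 B)%C.
Definition Mcomm (A B : M2) : M2 := Msub (Mmul A B) (Mmul B A).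

Definition Mderiv (F : R -> M2) (y : R) (L : M2) : Prop :=
  Cderiv (fun s => m11 (F s)) y (m11 L) /\ Cderiv (fun s => m12 (F s)) y (m12 L) /\
  Cderiv (fun s => m21 (F s)) y (m21 L) /\ Cderiv (fun s => m22 (F s)) y (m22 L).

(** Smoothness (C^infinity) of a real function of (x,t) in R^2:
    there is a family D w (w a word in {x = false, t = true}) of jointly
    continuous functions with D nil = f, and D (false :: w) (resp. D (true :: w))
    is the partial derivative in x (resp. t) of D w. *)
Definition jcont (g : R -> R -> R) : Prop :=
  forall x t eps, 0 < eps -> exists delta, 0 < delta /\
    forall x' t', Rabs (x' - x) < delta -> Rabs (t' - t) < delta ->
      Rabs (g x' t' - g x t) < eps.

Definition smooth2 (f : R -> R -> R) : Prop :=
  exists D : list bool -> R -> R -> R,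
    (forall x t, D nil x t = f x t) /\
    forall w, jcont (D w) /\
      (forall x t, derivable_pt_lim (fun s => D w s t) x (D (false :: w) x t)) /\
      (forall x t, derivable_pt_lim (fun s => D w x s) t (D (true :: w) x t)).

Definition Cnum (r : R) : Cx := RtoC r.

(** The Lax matrices; arguments: spectral parameter lam, values p, p_x at the point. *)
Definition Umat (lam p : Cx) : M2 :=
  mkM2 (- (Ci * lam))%C (Ci * p)%C (Ci * Cconj p)%C (Ci * lam)%C.

Definition Vmat (lam p px : Cx) : M2 :=
  mkM2 (Cnum (-2) * Ci * lam * lam + Ci * RtoC (Cnorm2 p))%C
       (Cnum 2 * Ci * lam * p - px)%C
       (Cnum 2 * Ci * lam * Cconj p + Cconj px)%C
       (Cnum 2 * Ci * lam * lam - Ci * RtoC (Cnorm2 p))%C.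

Definition Psi11 (c0 c1 c2 : R) (lam p px pxx : Cx) : Cx :=
  (- (Ci * lam * lam * lam) - Ci * RtoC c2 * lam * lam
   + (Cnum (1/2) * Ci * RtoC (Cnorm2 p) - Ci * RtoC c1) * lam
   + Cnum (1/4) * (p * Cconj px - px * Cconj p)
   + Cnum (1/2) * Ci * RtoC c2 * RtoC (Cnorm2 p) - Ci * RtoC c0)%C.

Definition Psi12 (c0 c1 c2 : R) (lam p px pxx : Cx) : Cx :=
  (Ci * p * lam * lam + (- (Cnum (1/2) * px) + Ci * RtoC c2 * p) * lam
   - Cnum (1/4) * Ci * pxx - Cnum (1/2) * Ci * p * RtoC (Cnorm2 p)
   - Cnum (1/2) * RtoC c2 * px + Ci * RtoC c1 * p)%C.

Definition Psi21 (c0 c1 c2 : R) (lam p px pxx : Cx) : Cx :=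
  (Ci * Cconj p * lam * lam + (Cnum (1/2) * Cconj px + Ci * RtoC c2 * Cconj p) * lam
   - Cnum (1/4) * Ci * Cconj pxx - Cnum (1/2) * Ci * Cconj p * RtoC (Cnorm2 p)
   + Cnum (1/2) * RtoC c2 * Cconj px + Ci * RtoC c1 * Cconj p)%C.

Definition Psimat (c0 c1 c2 : R) (lam p px pxx : Cx) : M2 :=
  mkM2 (Psi11 c0 c1 c2 lam p px pxx) (Psi12 c0 c1 c2 lam p px pxx)
       (Psi21 c0 c1 c2 lam p px pxx) (- Psi11 c0 c1 c2 lam p px pxx)%C.

Definition nu1v (p : Cx) : Cx := RtoC (Cnorm2 p).
Definition nu2v (p px : Cx) : Cx := (Ci * (Cconj p * px - p * Cconj px))%C.

From Stdlib Require Import Reals Lra.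
Open Scope R_scope.

(* For real [lam], [Psi11 lam] is purely imaginary:
   [Psi11 lam = i (- lam^3 - c2 lam^2 + (nu1/2 - c1) lam + nu2/4 + c2 nu1/2 - c0)].
   Hence [nu1] and [nu2] are affine in [Im Psi11(1)] and [Im Psi11(0)], and their
   x- and t-derivatives are the same combinations of the (1,1) entries of the
   commutators [[U, Psi]] and [[V, Psi]].  Reading [p_x] and [p_xx] off the
   factorisation [Psi12 = i p (lam - mu1) (lam - mu2)] turns these entries into
   the stated polynomials in [mu1], [mu2]. *)

Definition nu1_of_Psi11 (z1 z0 : Cx) : R := 2 * Cim z1 + (-2) * Cim z0.

Definition nu2_of_Psi11 (c2 : R) (z1 z0 : Cx) : R :=
  (-4 * c2) * Cim z1 + (4 + 4 * c2) * Cim z0.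

Definition Psi11_dx (c0 c1 c2 : R) (lam P Px Pxx : Cx) : Cx :=
  m11 (Mcomm (Umat lam P) (Psimat c0 c1 c2 lam P Px Pxx)).

Definition Psi11_dt (c0 c1 c2 : R) (lam P Px Pxx : Cx) : Cx :=
  m11 (Mcomm (Vmat lam P Px) (Psimat c0 c1 c2 lam P Px Pxx)).

Ltac unfold_Cx :=
  cbv -[Rplus Rmult Ropp Rminus Rdiv Rinv] in *.

Lemma nu1_Psi11 c0 c1 c2 P Px Pxx :
  Cnorm2 P = nu1_of_Psi11 (Psi11 c0 c1 c2 (RtoC 1) P Px Pxx)
                          (Psi11 c0 c1 c2 (RtoC 0) P Px Pxx) + 2 * (1 + c1 + c2).
Proof. destruct P as [a b], Px as [u v], Pxx as [w z]; unfold_Cx; field. Qed.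

Lemma nu2_Psi11 c0 c1 c2 P Px Pxx :
  Cre (nu2v P Px) = nu2_of_Psi11 c2 (Psi11 c0 c1 c2 (RtoC 1) P Px Pxx)
                                    (Psi11 c0 c1 c2 (RtoC 0) P Px Pxx)
                    + (4 * c0 - 4 * c2 * (1 + c1 + c2)).
Proof. destruct P as [a b], Px as [u v], Pxx as [w z]; unfold_Cx; field. Qed.

Lemma nu2_real P Px : Cim (nu2v P Px) = 0.
Proof. destruct P as [a b], Px as [u v]; unfold_Cx; ring. Qed.

Lemma derivable_pt_lim_affine (f g h : R -> R) (y lf lg a b c : R) :
  derivable_pt_lim f y lf -> derivable_pt_lim g y lg ->
  (forall s, h s = a * f s + b * g s + c) ->
  derivable_pt_lim h y (a * lf + b * lg).
Proof.
  intros Df Dg Eh.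
  apply derivable_pt_lim_ext with (f := fun s => a * f s + b * g s + c).
  { intro s; symmetry; apply Eh. }
  replace (a * lf + b * lg) with (a * lf + b * lg + 0) by ring.
  apply derivable_pt_lim_plus; [| apply derivable_pt_lim_const].
  apply derivable_pt_lim_plus; apply derivable_pt_lim_scal; assumption.
Qed.

Lemma Cderiv_real (f : R -> Cx) (y l : R) :
  (forall s, Cim (f s) = 0) -> derivable_pt_lim (fun s => Cre (f s)) y l ->
  Cderiv f y (RtoC l).
Proof.
  intros Him Dre; split; [exact Dre |].
  apply derivable_pt_lim_ext with (f := fun _ => 0).
  - intro s; symmetry; apply Him.
  - apply derivable_pt_lim_const.
Qed.

Lemma Cderiv_nu_Psi11 c0 c1 c2 (P Px Pxx : R -> Cx) (y : R) (K1 K0 : Cx) :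
  Cderiv (fun s => Psi11 c0 c1 c2 (RtoC 1) (P s) (Px s) (Pxx s)) y K1 ->
  Cderiv (fun s => Psi11 c0 c1 c2 (RtoC 0) (P s) (Px s) (Pxx s)) y K0 ->
  Cderiv (fun s => nu1v (P s)) y (RtoC (nu1_of_Psi11 K1 K0)) /\
  Cderiv (fun s => nu2v (P s) (Px s)) y (RtoC (nu2_of_Psi11 c2 K1 K0)).
Proof.
  intros [_ D1] [_ D0]; split; apply Cderiv_real; try reflexivity.
  - eapply derivable_pt_lim_affine; [exact D1 | exact D0 |].
    intro s; apply nu1_Psi11.
  - intro s; apply nu2_real.
  - eapply derivable_pt_lim_affine; [exact D1 | exact D0 |].
    intro s; apply nu2_Psi11.
Qed.

Lemma nu1_dt_nu2_dx c0 c1 c2 P Px Pxx :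
  nu1_of_Psi11 (Psi11_dt c0 c1 c2 (RtoC 1) P Px Pxx) (Psi11_dt c0 c1 c2 (RtoC 0) P Px Pxx)
  = nu2_of_Psi11 c2 (Psi11_dx c0 c1 c2 (RtoC 1) P Px Pxx)
                    (Psi11_dx c0 c1 c2 (RtoC 0) P Px Pxx).
Proof. destruct P as [a b], Px as [u v], Pxx as [w z]; unfold_Cx; field. Qed.

Lemma Dirichlet_px_pxx c0 c1 c2 P Px Pxx mu1 mu2 :
  (forall lam, Psi12 c0 c1 c2 lam P Px Pxx = (Ci * P * (lam - mu1) * (lam - mu2))%C) ->
  Px = (Cnum 2 * Ci * P * (mu1 + mu2 + RtoC c2))%C /\
  Pxx = (Cnum (-2) * RtoC (Cnorm2 P) * P + Cnum 2 * Ci * RtoC c2 * Px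
         + Cnum 4 * RtoC c1 * P - Cnum 4 * P * mu1 * mu2)%C.
Proof.
  intro Hfac.
  pose proof (Hfac (RtoC 1)) as H1; pose proof (Hfac (RtoC 0)) as H0;
  pose proof (Hfac (RtoC (-1))) as Hm; clear Hfac.
  destruct P as [a b], Px as [u v], Pxx as [w z], mu1 as [m n], mu2 as [k l].
  unfold_Cx.
  injection H1 as H1re H1im; injection H0 as H0re H0im; injection Hm as Hmre Hmim.
  assert (Hu : u = -2 * (a * (n + l) + b * (m + k + c2))) by lra.
  assert (Hv : v = 2 * (a * (m + k + c2) - b * (n + l))) by lra.
  split; f_equal; lra.
Qed.

Section DirichletEigenvalues.

Variables (c0 c1 c2 : R) (P Px Pxx mu1 mu2 : Cx).

Hypothesis HPx : Px = (Cnum 2 * Ci * P * (mu1 + mu2 + RtoC c2))%C.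
Hypothesis HPxx :
  Pxx = (Cnum (-2) * RtoC (Cnorm2 P) * P + Cnum 2 * Ci * RtoC c2 * Px
         + Cnum 4 * RtoC c1 * P - Cnum 4 * P * mu1 * mu2)%C.

Let dx (lam : Cx) : Cx := Psi11_dx c0 c1 c2 lam P Px Pxx.
Let dt (lam : Cx) : Cx := Psi11_dt c0 c1 c2 lam P Px Pxx.

Lemma nu1_dx_Dirichlet :
  RtoC (nu1_of_Psi11 (dx (RtoC 1)) (dx (RtoC 0)))
  = (Cnum 2 * Ci * nu1v P * (mu1 + mu2 - Cconj mu1 - Cconj mu2))%C.
Proof.
  subst dx Pxx; subst Px; destruct P as [a b], mu1 as [m n], mu2 as [k l].
  unfold_Cx; f_equal; field.
Qed.

Lemma nu2_dx_Dirichlet :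
  RtoC (nu2_of_Psi11 c2 (dx (RtoC 1)) (dx (RtoC 0)))
  = (Cnum 4 * Ci * nu1v P * (Cconj mu1 * Cconj mu2 - mu1 * mu2)
     - Cnum 2 * RtoC c2 * RtoC (nu1_of_Psi11 (dx (RtoC 1)) (dx (RtoC 0))))%C.
Proof.
  subst dx Pxx; subst Px; destruct P as [a b], mu1 as [m n], mu2 as [k l].
  unfold_Cx; f_equal; field.
Qed.

Lemma nu2_dt_Dirichlet :
  RtoC (nu2_of_Psi11 c2 (dt (RtoC 1)) (dt (RtoC 0)))
  = (Cnum 8 * Ci * nu1v P
       * ((mu1 - Cconj mu1) * (mu2 * Cconj mu2) + (mu2 - Cconj mu2) * (mu1 * Cconj mu1))
     - Cnum 4 * RtoC c2 * RtoC (nu2_of_Psi11 c2 (dx (RtoC 1)) (dx (RtoC 0)))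
     - Cnum 4 * RtoC c2 * RtoC c2 * RtoC (nu1_of_Psi11 (dx (RtoC 1)) (dx (RtoC 0))))%C.
Proof.
  subst dx dt Pxx; subst Px; destruct P as [a b], mu1 as [m n], mu2 as [k l].
  unfold_Cx; f_equal; field.
Qed.

End DirichletEigenvalues.

Theorem mainTheorem4
  (p px pxx pt : R -> R -> Cx)
  (Hsm_re : smooth2 (fun x t => Cre (p x t)))
  (Hsm_im : smooth2 (fun x t => Cim (p x t)))
  (Hpx : forall x t, Cderiv (fun s => p s t) x (px x t))
  (Hpxx : forall x t, Cderiv (fun s => px s t) x (pxx x t))
  (Hpt : forall x t, Cderiv (fun s => p x s) t (pt x t))
  (Hnls : forall x t,
     (Ci * pt x t + pxx x t + Cnum 2 * RtoC (Cnorm2 (p x t)) * p x t)%C = C0)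
  (c0 c1 c2 : R)
  (HPsix : forall (lam : Cx) x t,
     Mderiv (fun s => Psimat c0 c1 c2 lam (p s t) (px s t) (pxx s t)) x
            (Mcomm (Umat lam (p x t)) (Psimat c0 c1 c2 lam (p x t) (px x t) (pxx x t))))
  (HPsit : forall (lam : Cx) x t,
     Mderiv (fun s => Psimat c0 c1 c2 lam (p x s) (px x s) (pxx x s)) t
            (Mcomm (Vmat lam (p x t) (px x t))
                   (Psimat c0 c1 c2 lam (p x t) (px x t) (pxx x t)))) :
  forall (x t : R) (mu1 mu2 : Cx),
    p x t <> C0 ->
    (forall lam : Cx, Psi12 c0 c1 c2 lam (p x t) (px x t) (pxx x t)
                     = (Ci * p x t * (lam - mu1) * (lam - mu2))%C) ->
    exists d1x d2x d1t d2t : Cx,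
      Cderiv (fun s => nu1v (p s t)) x d1x /\
      Cderiv (fun s => nu2v (p s t) (px s t)) x d2x /\
      Cderiv (fun s => nu1v (p x s)) t d1t /\
      Cderiv (fun s => nu2v (p x s) (px x s)) t d2t /\
      d1x = (Cnum 2 * Ci * nu1v (p x t) * (mu1 + mu2 - Cconj mu1 - Cconj mu2))%C /\
      d2x = (Cnum 4 * Ci * nu1v (p x t) * (Cconj mu1 * Cconj mu2 - mu1 * mu2)
             - Cnum 2 * RtoC c2 * d1x)%C /\
      d1t = d2x /\
      d2t = (Cnum 8 * Ci * nu1v (p x t)
               * ((mu1 - Cconj mu1) * (mu2 * Cconj mu2)
                  + (mu2 - Cconj mu2) * (mu1 * Cconj mu1))
             - Cnum 4 * RtoC c2 * d2x - Cnum 4 * RtoC c2 * RtoC c2 * d1x)%C.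
Proof.
  intros x t mu1 mu2 _ Hfac.
  destruct (HPsix (RtoC 1) x t) as [D1x _].
  destruct (HPsix (RtoC 0) x t) as [D0x _].
  destruct (HPsit (RtoC 1) x t) as [D1t _].
  destruct (HPsit (RtoC 0) x t) as [D0t _].
  destruct (Cderiv_nu_Psi11 c0 c1 c2 (fun s => p s t) (fun s => px s t) (fun s => pxx s t)
                            x _ _ D1x D0x) as [Dnu1x Dnu2x].
  destruct (Cderiv_nu_Psi11 c0 c1 c2 (p x) (px x) (pxx x) t _ _ D1t D0t) as [Dnu1t Dnu2t].
  destruct (Dirichlet_px_pxx _ _ _ _ _ _ _ _ Hfac) as [HPx HPxx].
  do 4 eexists.
  refine (conj Dnu1x (conj Dnu2x (conj Dnu1t (conj Dnu2t _)))).
  refine (conj (nu1_dx_Dirichlet _ _ _ _ _ _ _ _ HPx HPxx) _).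
  refine (conj (nu2_dx_Dirichlet _ _ _ _ _ _ _ _ HPx HPxx) _).
  refine (conj (f_equal RtoC (nu1_dt_nu2_dx _ _ _ _ _ _)) _).
  exact (nu2_dt_Dirichlet _ _ _ _ _ _ _ _ HPx HPxx).
Qed.
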